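(* Let $\mathscr{X}$ be the class of functions defined in the context, let $\widehat x\in\mathscr X$ be the function with all coefficients $\theta_{m,k}=+1$, and let $x^*$ be the function defined in the context. Then: (a) $\displaystyle\max_{x\in\mathscr{X}}\max_{t\in[0,1]}|x(t)|=\max_{t\in[0,1]}\widehat x(t)=\frac13(2+\sqrt2)$, and the maximum of $\widehat x(t)$ is attained at $t=\frac13$ and $t=\frac23$. (b) $\displaystyle\max_{x\in\mathscr{X}}\max_{s,t\in[0,1]}|x(t)-x(s)|=\frac16(5+4\sqrt2)$, where the respective maxima are attained at $s=1/3$, $t=5/6$, and $x=x^*$.
   Context: The Faber--Schauder functions are $e_{0,0}(t):=(\min\{t,1-t\})^+$ and $e_{m,k}(t):=2^{-m/2}e_{0,0}(2^m t-k)$ for $t\in\mathbb R$, $m\ge1$, $k\in\mathbb Z$. For coefficients $\theta_{m,k}\in\{-1,+1\}$, the partial sums $x^n(t)=\sum_{m=0}^{n-1}\sum_{k=0}^{2^m-1}\theta_{m,k}e_{m,k}(t)$, $t\in[0,1]$, converge uniformly to a continuous function. $\mathscr X$ denotes the set of all functions $x\in C[0,1]$ of the form $x=\sum_{m=0}^\infty\sum_{k=0}^{2^m-1}\theta_{m,k}e_{m,k}$ with $\theta_{m,k}\in\{-1,+1\}$. Define $\widehat x:=\sum_{m=0}^\infty\sum_{k=0}^{2^m-1}e_{m,k}$ and $x^*:=e_{0,0}+\sum_{m=1}^\infty\Big(\sum_{k=0}^{2^{m-1}-1}e_{m,k}-\sum_{\ell=2^{m-1}}^{2^m-1}e_{m,\ell}\Big)$.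 *)

From Stdlib Require Import Reals Lra.
From Coquelicot Require Import Coquelicot.
Open Scope R_scope.

Definition e00 (t : R) : R := Rmax (Rmin t (1 - t)) 0.

Definition e (m k : nat) (t : R) : R :=
  Rpower 2 (- INR m / 2) * e00 (2 ^ m * t - INR k).

Fixpoint sumk (f : nat -> R) (n : nat) : R :=
  match n with
  | O => 0
  | S n' => sumk f n' + f n'
  end.

Definition level (theta : nat -> nat -> R) (m : nat) (t : R) : R :=
  sumk (fun k => theta m k * e m k t) (2 ^ m).

Definition partial (theta : nat -> nat -> R) (n : nat) (t : R) : R :=
  sumk (fun m => level theta m t) n.

Definition xfun (theta : nat -> nat -> R) (t : R) : R :=
  real (Lim_seq (fun n => partial theta n t)).

Definition sign_coeffs (theta : nat -> nat -> R) : Prop :=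
  forall m k, theta m k = 1 \/ theta m k = -1.

Definition theta_hat (m k : nat) : R := 1.
Definition xhat (t : R) : R := xfun theta_hat t.

Definition theta_star (m k : nat) : R :=
  match m with
  | O => 1
  | S m' => if Nat.ltb k (2 ^ m') then 1 else -1
  end.
Definition xstar (t : R) : R := xfun theta_star t.

From Stdlib Require Import Reals Lra Lia Classical.
From Coquelicot Require Import Coquelicot.
Open Scope R_scope.

(* Write rho = 2^(-1/2) and tent y for the distance from y to the nearest
   integer.  On a dyadic interval of level m only one e_{m,k} is active, so the
   level-m term of x at t is +-rho^m tent (2^m t), and
   tent (2^(m+1) t) = tent_map (tent (2^m t)) with tent_map u = min(2u, 1-2u).
   For a potential pot with u + rho pot (tent_map u) <= pot u, the quantity
   |x^n(t)| + rho^n pot (tent (2^n t)) does not increase with n, which bounds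
   |x| by max pot.  For a difference x(t) - x(s), while s and t share a dyadic
   interval the level-m terms contribute at most
   rho^m |tent (2^m t) - tent (2^m s)| <= rho^m / 2, and once they separate each
   point carries its own potential; the constant (5+4 sqrt 2)/6 absorbs both
   regimes.  The extremal values come from tent (2^m / 3) = 1/3 for all m,
   which turns xhat(1/3), xhat(2/3), x*(1/3) and x*(5/6) into geometric
   series. *)

Definition rho := sqrt 2 / 2.
Definition sup_bound := (2 + sqrt 2) / 3.
Definition osc_bound := (5 + 4 * sqrt 2) / 6.

Definition tent (y : R) : R := e00 (frac_part y).
Definition tent_map (u : R) : R := Rmin (2 * u) (1 - 2 * u).

(* [sup_bound = (1/3) / (1 - rho)] is the geometric sum at the fixed point 1/3
   of [tent_map]; the second branch is the line of slope [rho] through it. *)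
Definition pot (u : R) : R := Rmin sup_bound ((4 + sqrt 2) / 6 + rho * u).

Lemma sqrt2_sq : sqrt 2 * sqrt 2 = 2.
Proof. apply sqrt_sqrt; lra. Qed.

Lemma sqrt2_bounds : 1.41 < sqrt 2 < 1.42.
Proof. pose proof sqrt2_sq; pose proof (sqrt_pos 2); nra. Qed.

Lemma rho_sq : rho * rho = 1 / 2.
Proof. unfold rho; pose proof sqrt2_sq; nra. Qed.

Lemma rho_bounds : 0.705 < rho < 0.71.
Proof. unfold rho; pose proof sqrt2_bounds; lra. Qed.

Lemma rho_pow_pos m : 0 < rho ^ m.
Proof. apply pow_lt; pose proof rho_bounds; lra. Qed.

Lemma Rpower_2_half_neg m : Rpower 2 (- INR m / 2) = rho ^ m.
Proof.
  replace (- INR m / 2) with (/ 2 * - INR m) by field.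
  rewrite <- Rpower_mult, Rpower_sqrt, Rpower_Ropp, Rpower_pow, <- pow_inv
    by (try apply sqrt_lt_R0; lra).
  f_equal; unfold rho; pose proof sqrt2_bounds.
  rewrite <- sqrt2_sq at 3; field; lra.
Qed.

Lemma e_scaled m k t : e m k t = rho ^ m * e00 (2 ^ m * t - INR k).
Proof. unfold e; rewrite Rpower_2_half_neg; reflexivity. Qed.

Lemma e00_unit r : 0 <= r <= 1 -> e00 r = Rmin r (1 - r).
Proof. intros; unfold e00; apply Rmax_left; unfold Rmin; destruct Rle_dec; lra. Qed.

Lemma e00_outside r : r <= 0 \/ 1 <= r -> e00 r = 0.
Proof. intros; unfold e00; apply Rmax_right; unfold Rmin; destruct Rle_dec; lra. Qed.

Lemma tent_shift (k : Z) y : IZR k <= y <= IZR k + 1 -> tent y = e00 (y - IZR k).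
Proof.
  intros [Hk Hk1]; unfold tent.
  destruct (Rlt_or_le y (IZR k + 1)) as [Hlt | Hge].
  - destruct (Int_part_frac_part_spec y k (y - IZR k)) as [_ ->]; [lra | lra | easy].
  - destruct (Int_part_frac_part_spec y (k + 1) 0) as [_ <-];
      [lra | rewrite plus_IZR; lra |].
    rewrite !e00_outside; lra.
Qed.

Lemma tent_unit y : 0 <= y <= 1 -> tent y = Rmin y (1 - y).
Proof.
  intros; rewrite (tent_shift 0) by (simpl; lra).
  rewrite e00_unit by lra; f_equal; lra.
Qed.

Lemma tent_range y : 0 <= tent y <= 1 / 2.
Proof.
  unfold tent; destruct (base_fp y).
  rewrite e00_unit by lra; unfold Rmin; destruct Rle_dec; lra.
Qed.

Lemma tent_double y : tent (2 * y) = tent_map (tent y).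
Proof.
  pose proof (Rplus_Int_part_frac_part y) as Hy; destruct (base_fp y).
  set (n := Int_part y) in *; set (f := frac_part y) in *.
  replace (tent y) with (Rmin f (1 - f)) by (symmetry; apply e00_unit; lra).
  unfold tent_map; destruct (Rle_or_lt f (1 / 2)).
  - rewrite (tent_shift (2 * n)), mult_IZR, e00_unit by (rewrite ?mult_IZR; lra).
    unfold Rmin; repeat destruct Rle_dec; lra.
  - rewrite (tent_shift (2 * n + 1)), plus_IZR, mult_IZR, e00_unit
      by (rewrite ?plus_IZR, ?mult_IZR; lra).
    unfold Rmin; repeat destruct Rle_dec; lra.
Qed.

Lemma tent_pow2_succ m t : tent (2 ^ S m * t) = tent_map (tent (2 ^ m * t)).
Proof. rewrite <- tent_double; f_equal; simpl; ring. Qed.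

Lemma sumk_eq0 f n : (forall j, (j < n)%nat -> f j = 0) -> sumk f n = 0.
Proof.
  induction n as [|n IH]; intros Hf; simpl; [easy |].
  rewrite IH, Hf by (intros; try apply Hf; lia); ring.
Qed.

Lemma sumk_single f n k :
  (k < n)%nat -> (forall j, (j < n)%nat -> j <> k -> f j = 0) -> sumk f n = f k.
Proof.
  induction n as [|n IH]; intros Hk Hf; [lia | simpl].
  destruct (Nat.eq_dec k n) as [-> | Hne].
  - rewrite sumk_eq0 by (intros; apply Hf; lia); ring.
  - rewrite IH, (Hf n) by (intros; try apply Hf; lia); ring.
Qed.

Definition in_dyadic (m k : nat) (t : R) : Prop :=
  (k < 2 ^ m)%nat /\ INR k <= 2 ^ m * t <= INR k + 1.

Definition same_dyadic (m : nat) (t s : R) : Prop :=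
  exists k, in_dyadic m k t /\ in_dyadic m k s.

Lemma in_dyadic_exists m t : 0 <= t <= 1 -> exists k, in_dyadic m k t.
Proof.
  intros Ht; induction m as [|m [k [Hk Hkt]]].
  - exists 0%nat; split; simpl; [lia | lra].
  - unfold in_dyadic; rewrite Nat.pow_succ_r'; simpl pow.
    destruct (Rle_or_lt (2 * (2 ^ m * t)) (2 * INR k + 1)).
    + exists (2 * k)%nat; rewrite mult_INR; simpl (INR 2); split; [lia | lra].
    + exists (2 * k + 1)%nat; rewrite plus_INR, mult_INR; simpl (INR 2); simpl (INR 1).
      split; [lia | lra].
Qed.

Lemma same_dyadic_0 t s : 0 <= t <= 1 -> 0 <= s <= 1 -> same_dyadic 0 t s.
Proof. intros; exists 0%nat; split; split; simpl; lia || lra. Qed.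

Lemma same_dyadic_pred m t s : same_dyadic (S m) t s -> same_dyadic m t s.
Proof.
  intros [k [[Hk Ht] [_ Hs]]]; rewrite Nat.pow_succ_r' in Hk; simpl pow in Ht, Hs.
  destruct (Nat.Even_or_Odd k) as [[q ->] | [q ->]]; exists q;
    rewrite ?plus_INR, mult_INR in *; simpl (INR 2) in *; simpl (INR 1) in *;
    split; split; lia || lra.
Qed.

Lemma in_dyadic_left m k t : in_dyadic (S m) k t -> t < 1 / 2 -> (k < 2 ^ m)%nat.
Proof.
  intros [_ Ht] Hlt; simpl pow in Ht; apply INR_lt.
  rewrite pow_INR; replace (INR 2) with 2 by (simpl; ring).
  pose proof (pow_lt 2 m ltac:(lra)); nra.
Qed.

Lemma in_dyadic_right m k t : in_dyadic (S m) k t -> 1 / 2 < t -> (2 ^ m <= k)%nat.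
Proof.
  intros [_ Ht] Hgt; simpl pow in Ht; apply Nat.lt_succ_r, INR_lt.
  rewrite S_INR, pow_INR; replace (INR 2) with 2 by (simpl; ring).
  pose proof (pow_lt 2 m ltac:(lra)); nra.
Qed.

Lemma level_in_dyadic theta m k t : in_dyadic m k t ->
  level theta m t = theta m k * (rho ^ m * tent (2 ^ m * t)).
Proof.
  intros [Hk Ht]; unfold level; rewrite (sumk_single _ _ k Hk).
  - rewrite e_scaled, (tent_shift (Z.of_nat k)), <- INR_IZR_INZ; [easy |].
    rewrite <- INR_IZR_INZ; lra.
  - intros j Hj Hne; rewrite e_scaled, e00_outside; [ring |].
    destruct (Nat.lt_ge_cases j k) as [Hjk | Hkj].
    + apply le_INR in Hjk; rewrite S_INR in Hjk; right; lra.
    + assert (Hkj' : (S k <= j)%nat) by lia.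
      apply le_INR in Hkj'; rewrite S_INR in Hkj'; left; lra.
Qed.

Lemma tent_map_range u : 0 <= u <= 1 / 2 -> 0 <= tent_map u <= 1 / 2.
Proof. intros; unfold tent_map, Rmin; destruct Rle_dec; lra. Qed.

Lemma pot_le_sup u : pot u <= sup_bound.
Proof. apply Rmin_l. Qed.

Lemma pot_nonneg u : 0 <= u -> 0 <= pot u.
Proof.
  intros; unfold pot, sup_bound; pose proof sqrt2_bounds; pose proof rho_bounds.
  apply Rmin_glb; nra.
Qed.

Lemma pot_step u : 0 <= u <= 1 / 2 -> u + rho * pot (tent_map u) <= pot u.
Proof.
  intros Hu; pose proof (tent_map_range u Hu); pose proof rho_bounds.
  assert (Hsup : rho * pot (tent_map u) <= (sqrt 2 + 1) / 3).
  { replace ((sqrt 2 + 1) / 3) with (rho * sup_bound)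
      by (unfold rho, sup_bound; pose proof sqrt2_sq; lra).
    apply Rmult_le_compat_l; [lra | apply pot_le_sup]. }
  assert (Hlin : rho * pot (tent_map u) <= (2 * sqrt 2 + 1) / 6 + tent_map u / 2).
  { replace ((2 * sqrt 2 + 1) / 6 + tent_map u / 2)
      with (rho * ((4 + sqrt 2) / 6 + rho * tent_map u))
      by (rewrite Rmult_plus_distr_l, <- Rmult_assoc, rho_sq; unfold rho;
          pose proof sqrt2_sq; lra).
    apply Rmult_le_compat_l; [lra | apply Rmin_r]. }
  assert (tent_map u <= 2 * u) by apply Rmin_l.
  assert (tent_map u <= 1 - 2 * u) by apply Rmin_r.
  pose proof sqrt2_bounds; unfold pot at 2, sup_bound; apply Rmin_glb.
  - destruct (Rle_or_lt u (1 / 3)); lra.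
  - destruct (Rle_or_lt u (1 / 6)); [| destruct (Rle_or_lt u (1 / 3))].
    + assert ((rho - 0.705) * u >= 0) by nra; unfold rho in *; lra.
    + assert ((1 - rho) * (1 / 3 - u) >= 0) by nra; unfold rho in *; lra.
    + assert (rho * (u - 1 / 3) >= 0) by nra; unfold rho in *; lra.
Qed.

Lemma osc_split u v : 0 <= u <= 1 / 2 -> 0 <= v <= 1 / 2 ->
  Rabs (u - v) + rho * (pot (tent_map u) + pot (tent_map v)) <= osc_bound.
Proof.
  intros Hu Hv; pose proof rho_bounds.
  assert (Hlin : rho * (pot (tent_map u) + pot (tent_map v))
                 <= (2 * sqrt 2 + 1) / 3 + (tent_map u + tent_map v) / 2).
  { replace ((2 * sqrt 2 + 1) / 3 + (tent_map u + tent_map v) / 2)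
      with (rho * (((4 + sqrt 2) / 6 + rho * tent_map u)
                   + ((4 + sqrt 2) / 6 + rho * tent_map v)))
      by (rewrite !Rmult_plus_distr_l, <- !Rmult_assoc, rho_sq;
          unfold rho; pose proof sqrt2_sq; lra).
    apply Rmult_le_compat_l; [lra |]; apply Rplus_le_compat; apply Rmin_r. }
  assert (tent_map u <= 2 * u) by apply Rmin_l.
  assert (tent_map u <= 1 - 2 * u) by apply Rmin_r.
  assert (tent_map v <= 2 * v) by apply Rmin_l.
  assert (tent_map v <= 1 - 2 * v) by apply Rmin_r.
  unfold osc_bound, Rabs; destruct Rcase_abs; lra.
Qed.

Lemma osc_half : 1 / 2 + rho * osc_bound <= osc_bound.
Proof.
  unfold rho, osc_bound; pose proof sqrt2_sq; pose proof sqrt2_bounds; nra.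
Qed.

Section SignCoefficients.

Variable theta : nat -> nat -> R.
Hypothesis theta_sign : sign_coeffs theta.

Lemma Rabs_theta m k : Rabs (theta m k) = 1.
Proof. destruct (theta_sign m k) as [-> | ->]; unfold Rabs; destruct Rcase_abs; lra. Qed.

Lemma Rabs_level_le m t : 0 <= t <= 1 ->
  Rabs (level theta m t) <= rho ^ m * tent (2 ^ m * t).
Proof.
  intros Ht; destruct (in_dyadic_exists m t Ht) as [k Hk].
  rewrite (level_in_dyadic _ _ _ _ Hk), Rabs_mult, Rabs_theta, Rmult_1_l.
  pose proof (rho_pow_pos m); pose proof (tent_range (2 ^ m * t)).
  rewrite Rabs_right; nra.
Qed.

Lemma Rabs_level_sub_le m t s : same_dyadic m t s ->
  Rabs (level theta m t - level theta m s)
  <= rho ^ m * Rabs (tent (2 ^ m * t) - tent (2 ^ m * s)).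
Proof.
  intros [k [Ht Hs]]; rewrite (level_in_dyadic _ _ _ _ Ht), (level_in_dyadic _ _ _ _ Hs).
  rewrite <- Rmult_minus_distr_l, <- Rmult_minus_distr_l, !Rabs_mult, Rabs_theta.
  rewrite (Rabs_right (rho ^ m)); pose proof (rho_pow_pos m); lra.
Qed.

Lemma partial_succ n t : partial theta (S n) t = partial theta n t + level theta n t.
Proof. reflexivity. Qed.

Lemma Rabs_partial_pot_le t n : 0 <= t <= 1 ->
  Rabs (partial theta n t) + rho ^ n * pot (tent (2 ^ n * t)) <= pot (tent t).
Proof.
  intros Ht; induction n as [|n IH].
  - unfold partial; simpl; rewrite Rabs_R0, !Rmult_1_l; lra.
  - rewrite partial_succ, tent_pow2_succ.
    pose proof (Rabs_triang (partial theta n t) (level theta n t)).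
    pose proof (Rabs_level_le n t Ht).
    pose proof (Rmult_le_compat_l _ _ _ (Rlt_le _ _ (rho_pow_pos n)) (pot_step _ (tent_range (2 ^ n * t)))).
    simpl pow; lra.
Qed.

Lemma Rabs_partial_le t n : 0 <= t <= 1 -> Rabs (partial theta n t) <= sup_bound.
Proof.
  intros Ht; pose proof (Rabs_partial_pot_le t n Ht); pose proof (pot_le_sup (tent t)).
  pose proof (rho_pow_pos n); pose proof (pot_nonneg _ (proj1 (tent_range (2 ^ n * t)))).
  nra.
Qed.

Variables t s : R.
Hypothesis t_unit : 0 <= t <= 1.
Hypothesis s_unit : 0 <= s <= 1.

Let dpartial n := partial theta n t - partial theta n s.
Let u n := tent (2 ^ n * t).
Let v n := tent (2 ^ n * s).

Lemma dpartial_succ n : dpartial (S n) = dpartial n + (level theta n t - level theta n s).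
Proof. unfold dpartial; rewrite !partial_succ; ring. Qed.

(* Before t and s separate, the constant [osc_bound] plays the role of the
   potential of the pair; afterwards it is the sum of the two potentials. *)
Lemma Rabs_dpartial_pot_le n :
  (same_dyadic n t s -> Rabs (dpartial n) + rho ^ n * osc_bound <= osc_bound) /\
  (~ same_dyadic n t s ->
     Rabs (dpartial n) + rho ^ n * (pot (u n) + pot (v n)) <= osc_bound).
Proof.
  induction n as [|n [IHsame IHsep]].
  - split; intros Hn.
    + unfold dpartial, partial; simpl; rewrite Rminus_diag, Rabs_R0; lra.
    + contradict Hn; apply same_dyadic_0; assumption.
  - rewrite dpartial_succ; unfold u, v; rewrite !tent_pow2_succ; fold (u n) (v n).
    pose proof (Rabs_triang (dpartial n) (level theta n t - level theta n s)).
    pose proof (Rlt_le _ _ (rho_pow_pos n)) as Hr; pose proof (tent_range (2 ^ n * t)) as Hu;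
      pose proof (tent_range (2 ^ n * s)) as Hv; fold (u n) in Hu; fold (v n) in Hv.
    simpl pow; split; intros Hn.
    + pose proof (same_dyadic_pred _ _ _ Hn) as Hp.
      pose proof (Rabs_level_sub_le n t s Hp).
      assert (Huv : Rabs (u n - v n) + rho * osc_bound <= osc_bound)
        by (pose proof osc_half;
            assert (Rabs (u n - v n) <= 1 / 2) by (apply Rabs_le; lra); lra).
      pose proof (Rmult_le_compat_l _ _ _ Hr Huv).
      specialize (IHsame Hp); fold (u n) (v n) in *; lra.
    + destruct (classic (same_dyadic n t s)) as [Hp | Hp].
      * pose proof (Rabs_level_sub_le n t s Hp).
        pose proof (Rmult_le_compat_l _ _ _ Hr (osc_split _ _ Hu Hv)).
        specialize (IHsame Hp); fold (u n) (v n) in *; lra.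
      * pose proof (Rabs_level_le n t t_unit); pose proof (Rabs_level_le n s s_unit).
        pose proof (Rabs_triang (level theta n t) (- level theta n s)).
        rewrite Rabs_Ropp in *.
        pose proof (Rmult_le_compat_l _ _ _ Hr (pot_step _ Hu)).
        pose proof (Rmult_le_compat_l _ _ _ Hr (pot_step _ Hv)).
        specialize (IHsep Hp); fold (u n) (v n) in *; unfold Rminus in *; lra.
Qed.

Lemma Rabs_partial_sub_le n :
  Rabs (partial theta n t - partial theta n s) <= osc_bound.
Proof.
  destruct (Rabs_dpartial_pot_le n) as [Hsame Hsep]; fold (dpartial n).
  pose proof (rho_pow_pos n).
  pose proof (pot_nonneg _ (proj1 (tent_range (2 ^ n * t)))).
  pose proof (pot_nonneg _ (proj1 (tent_range (2 ^ n * s)))).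
  assert (0 <= osc_bound) by (unfold osc_bound; pose proof sqrt2_bounds; lra).
  destruct (classic (same_dyadic n t s)) as [Hp | Hp];
    [ specialize (Hsame Hp) | specialize (Hsep Hp); unfold u, v in Hsep ]; nra.
Qed.

End SignCoefficients.

Lemma is_lim_seq_partial theta t l : is_series (fun m => level theta m t) l ->
  is_lim_seq (fun n => partial theta n t) l.
Proof.
  intros Hl; apply is_lim_seq_incr_1.
  apply is_lim_seq_ext with (fun n => sum_n (fun m => level theta m t) n); [| exact Hl].
  induction n as [|n IH].
  - rewrite sum_O; unfold partial; simpl; ring.
  - rewrite sum_Sn, IH; reflexivity.
Qed.

Lemma xfun_is_series theta t l : is_series (fun m => level theta m t) l -> xfun theta t = l.
Proof.
  intros Hl; unfold xfun; rewrite (is_lim_seq_unique _ _ (is_lim_seq_partial _ _ _ Hl)).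
  reflexivity.
Qed.

Lemma is_lim_seq_xfun theta t : sign_coeffs theta -> 0 <= t <= 1 ->
  is_lim_seq (fun n => partial theta n t) (xfun theta t).
Proof.
  intros Hs Ht.
  assert (Hex : ex_series (fun m => level theta m t)).
  { apply (@ex_series_le R_AbsRing R_CompleteNormedModule) with (fun m => rho ^ m * (1 / 2)).
    - intros n; change (norm (level theta n t)) with (Rabs (level theta n t)).
      pose proof (Rabs_level_le theta Hs n t Ht); pose proof (tent_range (2 ^ n * t)).
      pose proof (rho_pow_pos n); nra.
    - apply ex_series_scal_r, ex_series_geom.
      pose proof rho_bounds; rewrite Rabs_right; lra. }
  destruct Hex as [l Hl]; rewrite (xfun_is_series _ _ _ Hl).
  apply is_lim_seq_partial, Hl.
Qed.

Lemma is_lim_seq_Rabs_le (w : nat -> R) (l M : R) :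
  is_lim_seq w l -> (forall n, Rabs (w n) <= M) -> Rabs l <= M.
Proof.
  intros Hl Hw; assert (Hbetween : forall n, - M <= w n <= M) by (intros; apply Rabs_le_between, Hw).
  apply Rabs_le; split.
  - assert (H : Rbar_le (- M) l); [| exact H].
    apply (is_lim_seq_le (fun _ => - M) w); [apply Hbetween | apply is_lim_seq_const | exact Hl].
  - assert (H : Rbar_le l M); [| exact H].
    apply (is_lim_seq_le w (fun _ => M)); [apply Hbetween | exact Hl | apply is_lim_seq_const].
Qed.

Lemma tent_map_third : tent_map (1 / 3) = 1 / 3.
Proof. unfold tent_map, Rmin; destruct Rle_dec; lra. Qed.

Lemma tent_third m : tent (2 ^ m * (1 / 3)) = 1 / 3.
Proof.
  induction m as [|m IH].
  - rewrite Rmult_1_l, tent_unit by lra; unfold Rmin; destruct Rle_dec; lra.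
  - rewrite tent_pow2_succ, IH; apply tent_map_third.
Qed.

Lemma tent_five_sixths m : tent (2 ^ S m * (5 / 6)) = 1 / 3.
Proof.
  induction m as [|m IH].
  - rewrite tent_pow2_succ, Rmult_1_l, tent_unit by lra.
    unfold tent_map, Rmin; repeat destruct Rle_dec; lra.
  - rewrite tent_pow2_succ, IH; apply tent_map_third.
Qed.

Lemma sup_bound_fixed : sup_bound * (1 - rho) = 1 / 3.
Proof. unfold sup_bound, rho; pose proof sqrt2_sq; lra. Qed.

Lemma is_series_geom_third : is_series (fun m => rho ^ m * (1 / 3)) sup_bound.
Proof.
  pose proof rho_bounds.
  replace sup_bound with (/ (1 - rho) * (1 / 3)).
  - apply is_series_scal_r, is_series_geom; rewrite Rabs_right; lra.
  - rewrite <- sup_bound_fixed; field; lra.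
Qed.

Lemma level_hat m t : 0 <= t <= 1 -> level theta_hat m t = rho ^ m * tent (2 ^ m * t).
Proof.
  intros Ht; destruct (in_dyadic_exists m t Ht) as [k Hk].
  rewrite (level_in_dyadic _ _ _ _ Hk); unfold theta_hat; ring.
Qed.

Lemma xhat_third : xhat (1 / 3) = sup_bound.
Proof.
  apply xfun_is_series; eapply is_series_ext; [| exact is_series_geom_third].
  intros m; rewrite level_hat, tent_third by lra; reflexivity.
Qed.

Lemma xhat_two_thirds : xhat (2 / 3) = sup_bound.
Proof.
  apply xfun_is_series; eapply is_series_ext; [| exact is_series_geom_third].
  intros m; rewrite level_hat by lra.
  replace (2 ^ m * (2 / 3)) with (2 ^ S m * (1 / 3)) by (simpl; field).
  rewrite tent_third; reflexivity.
Qed.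

Lemma level_star_third m : level theta_star m (1 / 3) = rho ^ m * (1 / 3).
Proof.
  destruct (in_dyadic_exists m (1 / 3) ltac:(lra)) as [k Hk].
  rewrite (level_in_dyadic _ _ _ _ Hk), tent_third.
  destruct m as [|m]; simpl theta_star; [ring |].
  rewrite (proj2 (Nat.ltb_lt k (2 ^ m))) by (apply (in_dyadic_left _ _ _ Hk); lra).
  ring.
Qed.

Lemma level_star_five_sixths m :
  level theta_star (S m) (5 / 6) = - rho * (rho ^ m * (1 / 3)).
Proof.
  destruct (in_dyadic_exists (S m) (5 / 6) ltac:(lra)) as [k Hk].
  rewrite (level_in_dyadic _ _ _ _ Hk), tent_five_sixths; simpl theta_star.
  rewrite (proj2 (Nat.ltb_ge k (2 ^ m))) by (apply (in_dyadic_right _ _ _ Hk); lra).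
  simpl pow; ring.
Qed.

Lemma xstar_third : xstar (1 / 3) = sup_bound.
Proof.
  apply xfun_is_series; eapply is_series_ext; [| exact is_series_geom_third].
  intros m; symmetry; apply level_star_third.
Qed.

Lemma xstar_five_sixths : xstar (5 / 6) = 1 / 2 - sup_bound.
Proof.
  assert (Hfirst : level theta_star 0 (5 / 6) = 1 / 6).
  { destruct (in_dyadic_exists 0 (5 / 6) ltac:(lra)) as [k Hk].
    rewrite (level_in_dyadic _ _ _ _ Hk); simpl theta_star.
    rewrite Rmult_1_l, tent_unit by lra; unfold Rmin; destruct Rle_dec; lra. }
  assert (Htail : is_series (fun m => level theta_star (S m) (5 / 6)) (- rho * sup_bound)).
  { eapply is_series_ext; [| exact (is_series_scal_l (- rho) _ _ is_series_geom_third)].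
    intros m; rewrite level_star_five_sixths; reflexivity. }
  apply xfun_is_series, is_series_decr_1.
  match goal with |- is_series _ ?l => replace l with (- rho * sup_bound) end; [exact Htail |].
  rewrite Hfirst; unfold plus, opp; simpl; pose proof sup_bound_fixed; lra.
Qed.

Theorem theorem2p2 :
  (* (a) *)
  ((forall theta, sign_coeffs theta ->
      forall t, 0 <= t <= 1 -> Rabs (xfun theta t) <= (2 + sqrt 2) / 3) /\
   (forall t, 0 <= t <= 1 -> xhat t <= (2 + sqrt 2) / 3) /\
   xhat (1/3) = (2 + sqrt 2) / 3 /\
   xhat (2/3) = (2 + sqrt 2) / 3) /\
  (* (b) *)
  ((forall theta, sign_coeffs theta ->
      forall s t, 0 <= s <= 1 -> 0 <= t <= 1 ->
        Rabs (xfun theta t - xfun theta s) <= (5 + 4 * sqrt 2) / 6) /\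
   Rabs (xstar (5/6) - xstar (1/3)) = (5 + 4 * sqrt 2) / 6).
Proof.
  change ((2 + sqrt 2) / 3) with sup_bound; change ((5 + 4 * sqrt 2) / 6) with osc_bound.
  assert (Hsup : forall theta, sign_coeffs theta ->
            forall t, 0 <= t <= 1 -> Rabs (xfun theta t) <= sup_bound).
  { intros theta Hs t Ht; apply (is_lim_seq_Rabs_le _ _ _ (is_lim_seq_xfun _ _ Hs Ht)).
    intros n; apply Rabs_partial_le; assumption. }
  split; [split; [| split; [| split]] | split].
  - exact Hsup.
  - intros t Ht; eapply Rle_trans; [apply Rle_abs | apply Hsup; [| exact Ht]].
    intros m k; left; reflexivity.
  - exact xhat_third.
  - exact xhat_two_thirds.
  - intros theta Hs s t Hs' Ht.
    apply (is_lim_seq_Rabs_le (fun n => partial theta n t - partial theta n s)).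
    + apply is_lim_seq_minus'; apply is_lim_seq_xfun; assumption.
    + intros n; apply Rabs_partial_sub_le; assumption.
  - rewrite xstar_five_sixths, xstar_third, Rabs_left.
    + unfold osc_bound, sup_bound; lra.
    + unfold sup_bound; pose proof sqrt2_bounds; lra.
Qed.
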